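(* Let $g:\mathbb{R}^n\to\mathbb{R}^m$ and $f:\mathbb{R}^m\to\mathbb{R}^r$. Suppose $g$ is second-order gph-regular at $x^*$ and $f$ is second-order gph-regular at $g(x^* )$. Then the composite mapping $h:=f\circ g$ is second-order gph-regular at $x^*$.
   Context: $g'(x;d)=\lim_{t\downarrow0}(g(x+td)-g(x))/t$; second-order directional derivative $g''(x;d,w):=\lim_{t\downarrow0}\frac{g(x+td+\frac12t^2w)-g(x)-tg'(x;d)}{\frac12t^2}$; $g$ is second-order directionally differentiable at $x$ if these exist for all $d,w$. A mapping $g$ is second-order gph-regular at $x^*$ if it is locally Lipschitz continuous and second-order directionally differentiable at $x^*$, and for every direction $d$ and every path $w:\mathbb{R}_+\to\mathbb{R}^n$ with $tw(t)\to0$ as $t\downarrow0$ there is $r$ with $\|r(t)\|/t^2\to0$ as $t\downarrow0$ such that $g(x^*+td+\frac12t^2w(t))=g(x^* )+tg'(x^*;d)+\frac12t^2g''(x^*;d,w(t))+r(t)$ for $t\ge0$. *)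

(* R : realType, R^n rendered as row vectors 'rV[R]_n. *)
From HB Require Import structures.
From mathcomp Require Import all_boot all_order all_algebra.
From mathcomp Require Import all_classical all_reals all_analysis.
Set Implicit Arguments. Unset Strict Implicit. Unset Printing Implicit Defensive.
Import Order.TTheory GRing.Theory Num.Theory.
Import numFieldNormedType.Exports.
Local Open Scope classical_set_scope.
Local Open Scope ring_scope.

Section Defs.
Variables (R : realType) (n m : nat).
Implicit Types (g : 'rV[R]_n -> 'rV[R]_m) (x d w : 'rV[R]_n).

Definition loc_lipschitz_at g x : Prop :=
  exists k : R, exists2 e : R, 0 < e &
    forall y z, ball x e y -> ball x e z -> `|g y - g z| <= k * `|y - z|.

Definition dd_quot g x d : R -> 'rV[R]_m :=
  fun t => t^-1 *: (g (x + t *: d) - g x).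

Definition dir_deriv g x d : 'rV[R]_m := lim (dd_quot g x d @ 0^'+).

Definition dd2_quot g x d w : R -> 'rV[R]_m :=
  fun t => (t ^+ 2 / 2)^-1 *:
    (g (x + t *: d + (t ^+ 2 / 2) *: w) - g x - t *: dir_deriv g x d).

Definition dir_deriv2 g x d w : 'rV[R]_m := lim (dd2_quot g x d w @ 0^'+).

Definition so_dir_differentiable g x : Prop :=
  forall d w, cvg (dd_quot g x d @ 0^'+) /\ cvg (dd2_quot g x d w @ 0^'+).

Definition so_gph_regular g x : Prop :=
  [/\ loc_lipschitz_at g x, so_dir_differentiable g x &
    forall d (w : R -> 'rV[R]_n),
      (fun t => t *: w t) @ 0^'+ --> (0 : 'rV[R]_n) ->
      exists r : R -> 'rV[R]_m,
        (fun t => `|r t| / t ^+ 2) @ 0^'+ --> (0 : R) /\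
        forall t : R, 0 <= t ->
          g (x + t *: d + (t ^+ 2 / 2) *: w t) =
            g x + t *: dir_deriv g x d + (t ^+ 2 / 2) *: dir_deriv2 g x d (w t)
            + r t].
End Defs.

From HB Require Import structures.
From mathcomp Require Import all_boot all_order all_algebra.
From mathcomp Require Import all_classical all_reals all_analysis.
From mathcomp Require Import ring.
Import Order.TTheory GRing.Theory Num.Theory.
Import numFieldNormedType.Exports.
Local Open Scope classical_set_scope.
Local Open Scope ring_scope.

(* Write P t = x + t d + t^2/2 w t.  Regularity of g gives g (P t) = Q t + o(t^2) with
   Q t = g x + t g'(x;d) + t^2/2 z t and z t = g''(x;d,w t).  Comparing P t with x + t d
   through the Lipschitz bound on g shows that t z t -> 0, so z is again an admissible
   path and the regularity of f applies along Q; since f is Lipschitz, the o(t^2) error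
   in its argument costs only o(t^2).  This is the expansion of f o g along P with
   first and second order terms f'(g x; g'(x;d)) and f''(g x; g'(x;d), g''(x;d,w t)),
   and the constant paths w = 0 and w = c identify these as the directional
   derivatives of f o g. *)

Section Asymptotics.
Context {R : realType}.

Lemma cvg0_le {T} {F : set_system T} {FF : Filter F} {V : normedModType R}
    (u : T -> V) (b : T -> R) :
  b @ F --> 0 -> (\forall t \near F, `|u t| <= b t) -> u @ F --> 0.
Proof.
move=> b0 ub; apply: norm_cvg0.
apply: (@squeeze_cvgr _ _ _ _ (cst 0) b) => //; last exact: cvg_cst.
by apply: filterS ub => t ->; rewrite normr_ge0.
Qed.

Lemma cvg_at_right0_id : (fun t : R => t) @ 0^'+ --> (0 : R).
Proof. exact/cvg_at_right_filter/cvg_id. Qed.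

Lemma near_at_right0_neq0 : \forall t \near (0 : R)^'+, t != 0.
Proof.
by near=> t; rewrite gt_eqF //; near: t; exact: nbhs_right_gt.
Unshelve. all: end_near. Qed.

Context {V : normedModType R}.
Implicit Types (y d : V) (w e : R -> V).

Definition admissible_path w := (fun t => t *: w t) @ 0^'+ --> 0.

Definition littleo_sq e := (fun t => (t ^+ 2)^-1 *: e t) @ 0^'+ --> 0.

Lemma littleo_sqE e :
  littleo_sq e <-> (fun t => `|e t| / t ^+ 2) @ 0^'+ --> (0 : R).
Proof.
rewrite /littleo_sq -norm_cvg0P; under eq_fun do rewrite normrZ.
by under eq_fun do rewrite ger0_norm ?invr_ge0 ?sqr_ge0 // mulrC.
Qed.

Lemma littleo_sqD {e1 e2} :
  littleo_sq e1 -> littleo_sq e2 -> littleo_sq (fun t => e1 t + e2 t).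
Proof.
move=> e1o e2o; rewrite /littleo_sq; under eq_fun do rewrite scalerDr.
by rewrite -[0 : V]addr0; exact: cvgD.
Qed.

Lemma littleo_sq_div {e} : littleo_sq e -> (fun t => t^-1 *: e t) @ 0^'+ --> 0.
Proof.
move=> eo; have lim0 : (fun t => t *: ((t ^+ 2)^-1 *: e t)) @ 0^'+ --> (0 : V).
  by rewrite -(scale0r (0 : V)); exact: cvgZ cvg_at_right0_id eo.
apply: cvg_trans lim0; apply: near_eq_cvg; apply: filterS near_at_right0_neq0 => t t0.
by rewrite scalerA; congr (_ *: _); field.
Qed.

Lemma littleo_sq_cvg0 {e} : littleo_sq e -> e @ 0^'+ --> 0.
Proof.
move=> /littleo_sq_div eo; have lim0 : (fun t => t *: (t^-1 *: e t)) @ 0^'+ --> (0 : V).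
  by rewrite -(scale0r (0 : V)); exact: cvgZ cvg_at_right0_id eo.
apply: cvg_trans lim0; apply: near_eq_cvg; apply: filterS near_at_right0_neq0 => t t0.
by rewrite scalerA mulfV ?scale1r.
Qed.

Lemma admissible_cst y : admissible_path (fun=> y).
Proof.
by rewrite /admissible_path -(scale0r y); exact: cvgZ cvg_at_right0_id (cvg_cst y).
Qed.

Lemma admissible_path_littleo {w} :
  admissible_path w -> (fun t => t^-1 *: ((t ^+ 2 / 2) *: w t)) @ 0^'+ --> 0.
Proof.
move=> wo; have lim0 : (fun t => 2^-1 *: (t *: w t)) @ 0^'+ --> (0 : V).
  by rewrite -[X in _ --> X](scaler0 _ 2^-1); exact: cvgZ (cvg_cst _) wo.
apply: cvg_trans lim0; apply: near_eq_cvg; apply: filterS near_at_right0_neq0 => t t0.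
by rewrite !scalerA; congr (_ *: _); field.
Qed.

Lemma line_cvg y d : (fun t => y + t *: d) @ 0^'+ --> y.
Proof.
by rewrite -[X in _ --> X]addr0; apply: cvgD (cvg_cst y) (admissible_cst d).
Qed.

Lemma admissible_path_cvg {w} y d :
  admissible_path w -> (fun t => y + t *: d + (t ^+ 2 / 2) *: w t) @ 0^'+ --> y.
Proof.
move=> wo; rewrite -[X in _ --> X]addr0; apply: cvgD (line_cvg y d) _.
have -> : (fun t => (t ^+ 2 / 2) *: w t) = (fun t => (t / 2) *: (t *: w t)).
  by apply/funext => t; rewrite scalerA; congr (_ *: _); ring.
rewrite -(scale0r (0 : V)); apply: cvgZ wo.
by rewrite -[X in _ --> X](mul0r 2^-1); exact: cvgM cvg_at_right0_id (cvg_cst _).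
Qed.

End Asymptotics.

Section LocalLipschitz.
Context {R : realType} {n m : nat}.
Context {f : 'rV[R]_n -> 'rV[R]_m} {y : 'rV[R]_n}.
Hypothesis f_lip : loc_lipschitz_at f y.

Lemma loc_lipschitz_near {T} {F : set_system T} {FF : Filter F} {p q : T -> 'rV[R]_n} :
  p @ F --> y -> q @ F --> y ->
  exists k, \forall t \near F, `|f (q t) - f (p t)| <= k * `|q t - p t|.
Proof.
have [k [e e0 lip]] := f_lip; move=> py qy; exists k.
near=> t; apply: lip.
- by near: t; apply: qy; exact: nbhsx_ballx.
- by near: t; apply: py; exact: nbhsx_ballx.
Unshelve. all: end_near. Qed.

Lemma loc_lipschitz_cvg0 {T} {F : set_system T} {FF : Filter F}
    {p q : T -> 'rV[R]_n} {s : T -> R} :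
  p @ F --> y -> q @ F --> y -> (fun t => s t *: (q t - p t)) @ F --> (0 : 'rV[R]_n) ->
  (fun t => s t *: (f (q t) - f (p t))) @ F --> (0 : 'rV[R]_m).
Proof.
move=> py qy sqp; have [k lip] := loc_lipschitz_near py qy.
apply: (cvg0_le _ (fun t => k * `|s t *: (q t - p t)|)).
  by rewrite -(mulr0 k) -(@normr0 _ 'rV[R]_n); exact: cvgM (cvg_cst k) (cvg_norm sqp).
apply: filterS lip => t lipt; rewrite !normrZ mulrCA.
by apply: ler_wpM2l.
Qed.

Lemma loc_lipschitz_cvg : f @ y --> f y.
Proof.
have [k lip] :=
  loc_lipschitz_near (F := nbhs y) (p := cst y) (q := id) (cvg_cst y) cvg_id.
have y0 : (fun u => u - y) @ y --> (0 : 'rV[R]_n) :=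
  (subr_cvg0 (FF := nbhs_filter y) id y).2 cvg_id.
apply/(subr_cvg0 (F := nbhs y))/(cvg0_le _ (fun u => k * `|u - y|)); last exact: lip.
by rewrite -(mulr0 k) -(@normr0 _ 'rV[R]_n); exact: cvgM (cvg_cst k) (cvg_norm y0).
Qed.

End LocalLipschitz.

Lemma loc_lipschitz_comp {R : realType} {n m p : nat}
    (g : 'rV[R]_n -> 'rV[R]_m) (f : 'rV[R]_m -> 'rV[R]_p) (x : 'rV[R]_n) :
  loc_lipschitz_at g x -> loc_lipschitz_at f (g x) -> loc_lipschitz_at (f \o g) x.
Proof.
move=> g_lip [kf [ef ef0 f_lip]]; have [kg [eg eg0 g_lip']] := g_lip.
have : \forall u \near x, ball x eg u /\ ball (g x) ef (g u).
  near=> u; split; near: u; first exact: nbhsx_ballx.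
  exact: (loc_lipschitz_cvg g_lip) (nbhsx_ballx _ _ ef0).
move=> /nbhs_ballP[e e0 near_x]; exists (`|kf| * `|kg|); exists e => // u v.
move=> /near_x[xu gu] /near_x[xv gv] /=.
apply: le_trans (f_lip _ _ gu gv) _; rewrite -mulrA.
apply: le_trans (ler_wpM2r (normr_ge0 _) (ler_norm kf)) _.
apply: ler_wpM2l => //; apply: le_trans (g_lip' _ _ xu xv) _.
by apply: ler_wpM2r => //; exact: ler_norm.
Unshelve. all: end_near. Qed.

Section SecondOrderRemainder.
Context {R : realType} {n p : nat}.
Variables (h : 'rV[R]_n -> 'rV[R]_p) (x d : 'rV[R]_n).

Definition so_remainder (w : R -> 'rV[R]_n) (a : 'rV[R]_p) (b : R -> 'rV[R]_p) t :=
  h (x + t *: d + (t ^+ 2 / 2) *: w t) - h x - (t *: a + (t ^+ 2 / 2) *: b t).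

Lemma so_expansion w a b t :
  h (x + t *: d + (t ^+ 2 / 2) *: w t) =
    h x + t *: a + (t ^+ 2 / 2) *: b t + so_remainder w a b t.
Proof. by rewrite -[h x + _ + _]addrA -[RHS]addrA !subrKC. Qed.

Lemma so_increment w a b t :
  h (x + t *: d + (t ^+ 2 / 2) *: w t) - h x =
    t *: a + (t ^+ 2 / 2) *: b t + so_remainder w a b t.
Proof. by rewrite subrKC. Qed.

Lemma so_gph_regular_remainder {w} :
  so_gph_regular h x -> admissible_path w ->
  littleo_sq (so_remainder w (dir_deriv h x d) (fun t => dir_deriv2 h x d (w t))).
Proof.
case=> _ _ /(_ d w) h_exp /h_exp[r [/littleo_sqE r_o r_eq]].
apply: cvg_trans r_o; apply: near_eq_cvg; near=> t.
have t0 : 0 <= t by near: t; exact: nbhs_right_ge.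
by move: (so_expansion w (dir_deriv h x d) (fun t => dir_deriv2 h x d (w t)) t);
  rewrite r_eq // => /addrI ->.
Unshelve. all: end_near. Qed.

Lemma dd_quot_cvg_remainder a c :
  littleo_sq (so_remainder (fun=> 0) a (fun=> c)) -> dd_quot h x d @ 0^'+ --> a.
Proof.
move=> /littleo_sq_div e_o.
have lim_a : (fun t => a + (t^-1 *: so_remainder (fun=> 0) a (fun=> c) t + (t / 2) *: c))
    @ 0^'+ --> a.
  rewrite -[X in _ --> X]addr0 -[X in _ --> a + X]addr0 -[X in _ --> a + (0 + X)](scale0r c).
  apply: cvgD (cvg_cst a) (cvgD e_o (cvgZ _ (cvg_cst c))).
  by rewrite -[X in _ --> X](mul0r 2^-1); exact: cvgM cvg_at_right0_id (cvg_cst _).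
apply: cvg_trans lim_a; apply: near_eq_cvg; apply: filterS near_at_right0_neq0 => t t0.
have := so_increment (fun=> 0) a (fun=> c) t; rewrite scaler0 addr0 /dd_quot => ->.
have half : t^-1 * (t ^+ 2 / 2) = t / 2 by field.
rewrite [in RHS]scalerDr [t^-1 *: (t *: a + _)]scalerDr !scalerA mulVf // scale1r half.
by rewrite -addrA [X in a + X]addrC.
Qed.

Lemma dd2_quot_cvg_remainder c b :
  littleo_sq (so_remainder (fun=> c) (dir_deriv h x d) (fun=> b)) ->
  dd2_quot h x d c @ 0^'+ --> b.
Proof.
move=> e_o.
have lim_b : (fun t => b + 2 *: ((t ^+ 2)^-1 *:
    so_remainder (fun=> c) (dir_deriv h x d) (fun=> b) t)) @ 0^'+ --> b.
  rewrite -[X in _ --> X]addr0 -[X in _ --> b + X](scaler0 _ 2).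
  exact: cvgD (cvg_cst b) (cvgZ (cvg_cst _) e_o).
apply: cvg_trans lim_b; apply: near_eq_cvg; apply: filterS near_at_right0_neq0 => t t0.
have := so_increment (fun=> c) (dir_deriv h x d) (fun=> b) t; rewrite /dd2_quot /= => ->.
rewrite [in RHS]addrAC [t *: _ + _]addrC addrK [in RHS]scalerDr [in RHS]scalerA.
rewrite mulVf ?scale1r ?scalerA; last by rewrite mulf_neq0 ?expf_neq0 ?invr_eq0.
by congr (_ + _ *: _); field.
Qed.

Lemma dd_quot_path_cvg {w} {v : 'rV[R]_p} :
  loc_lipschitz_at h x -> dd_quot h x d @ 0^'+ --> v -> admissible_path w ->
  (fun t => t^-1 *: (h (x + t *: d + (t ^+ 2 / 2) *: w t) - h x)) @ 0^'+ --> v.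
Proof.
move=> h_lip dq w_adm.
have shift : (fun t => t^-1 *: (h (x + t *: d + (t ^+ 2 / 2) *: w t) - h (x + t *: d)))
    @ 0^'+ --> (0 : 'rV[R]_p).
  have := loc_lipschitz_cvg0 (s := fun t => t^-1) h_lip
    (line_cvg x d) (admissible_path_cvg x d w_adm); apply.
  under eq_fun do rewrite addrC addKr.
  exact: admissible_path_littleo.
have -> : (fun t => t^-1 *: (h (x + t *: d + (t ^+ 2 / 2) *: w t) - h x)) =
    (fun t => t^-1 *: (h (x + t *: d + (t ^+ 2 / 2) *: w t) - h (x + t *: d)) + dd_quot h x d t).
  by apply/funext => t; rewrite /dd_quot -scalerDr subrKA.
by rewrite -[v]add0r; exact: cvgD shift dq.
Qed.

Lemma so_gph_regular_dir_deriv2_path {w} :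
  so_gph_regular h x -> admissible_path w ->
  admissible_path (fun t => dir_deriv2 h x d (w t)).
Proof.
move=> h_reg w_adm; have [h_lip h_dd _] := h_reg.
have e_o := littleo_sq_div (so_gph_regular_remainder h_reg w_adm).
have dq := dd_quot_path_cvg h_lip (h_dd d 0).1 w_adm.
(* Dividing the expansion of [h (P t) - h x] by [t / 2], with [z t = h''(x;d,w t)] and
   [e] its remainder: [t *: z t = 2 *: (t^-1 *: (h (P t) - h x) - h'(x;d) - t^-1 *: e t)]. *)
have lim0 : (fun t => 2 *: (t^-1 *: (h (x + t *: d + (t ^+ 2 / 2) *: w t) - h x)
    - dir_deriv h x d
    - t^-1 *: so_remainder w (dir_deriv h x d) (fun t => dir_deriv2 h x d (w t)) t))
    @ 0^'+ --> 2 *: (dir_deriv h x d - dir_deriv h x d - 0).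
  exact: cvgZ (cvg_cst _) (cvgB (cvgB dq (cvg_cst _)) e_o).
rewrite subrr subr0 scaler0 in lim0.
apply: cvg_trans lim0; apply: near_eq_cvg; apply: filterS near_at_right0_neq0 => t t0.
rewrite (so_increment w (dir_deriv h x d) (fun t => dir_deriv2 h x d (w t)) t) /=.
rewrite [t^-1 *: (_ + _ + _)]scalerDr addrAC addrK [t^-1 *: (_ + _)]scalerDr.
rewrite scalerA mulVf // scale1r.
by rewrite [dir_deriv h x d + _]addrC addrK !scalerA; congr (_ *: _); field.
Qed.

End SecondOrderRemainder.

Section Composition.
Context {R : realType} {n m p : nat}.
Context {g : 'rV[R]_n -> 'rV[R]_m} {f : 'rV[R]_m -> 'rV[R]_p} {x : 'rV[R]_n}.
Hypotheses (g_reg : so_gph_regular g x) (f_reg : so_gph_regular f (g x)).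

Lemma so_remainder_comp d w : admissible_path w ->
  littleo_sq (so_remainder (f \o g) x d w (dir_deriv f (g x) (dir_deriv g x d))
    (fun t => dir_deriv2 f (g x) (dir_deriv g x d) (dir_deriv2 g x d (w t)))).
Proof.
move=> w_adm; have [f_lip _ _] := f_reg.
set v := dir_deriv g x d; set z := fun t => dir_deriv2 g x d (w t).
set e1 := so_remainder g x d w v z.
set Q := fun t => g x + t *: v + (t ^+ 2 / 2) *: z t.
have z_adm : admissible_path z := so_gph_regular_dir_deriv2_path g x d g_reg w_adm.
have e1_o : littleo_sq e1 := so_gph_regular_remainder g x d g_reg w_adm.
have Q_cvg : Q @ 0^'+ --> g x := admissible_path_cvg (g x) v z_adm.
have Qe1_cvg : (fun t => Q t + e1 t) @ 0^'+ --> g x.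
  by rewrite -[g x]addr0; exact: cvgD Q_cvg (littleo_sq_cvg0 e1_o).
have f_shift : littleo_sq (fun t => f (Q t + e1 t) - f (Q t)).
  have := loc_lipschitz_cvg0 (s := fun t => (t ^+ 2)^-1) f_lip Q_cvg Qe1_cvg; apply.
  by under eq_fun do rewrite addrC addKr.
set a := dir_deriv f (g x) v; set b := fun t => dir_deriv2 f (g x) v (z t).
have -> : so_remainder (f \o g) x d w a b =
    (fun t => (f (Q t + e1 t) - f (Q t)) + so_remainder f (g x) v z a b t).
  have regroup (A B T S E : 'rV[R]_p) : A - B - (T + S) = A - (B + T + S + E) + E.
    by rewrite -(addrA B) !opprD !addrA subrK.
  apply/funext => t; rewrite [in RHS](so_expansion f (g x) v z a b t).
  by rewrite {1}/so_remainder /= (so_expansion g x d w v z t); exact: regroup.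
exact: littleo_sqD f_shift (so_gph_regular_remainder f (g x) v f_reg z_adm).
Qed.

Lemma dd_quot_comp_cvg d :
  dd_quot (f \o g) x d @ 0^'+ --> dir_deriv f (g x) (dir_deriv g x d).
Proof. exact/dd_quot_cvg_remainder/so_remainder_comp/admissible_cst. Qed.

Lemma dir_deriv_comp d :
  dir_deriv (f \o g) x d = dir_deriv f (g x) (dir_deriv g x d).
Proof. exact: cvg_lim (dd_quot_comp_cvg d). Qed.

Lemma dd2_quot_comp_cvg d c : dd2_quot (f \o g) x d c @ 0^'+ -->
  dir_deriv2 f (g x) (dir_deriv g x d) (dir_deriv2 g x d c).
Proof.
apply: dd2_quot_cvg_remainder; rewrite dir_deriv_comp.
exact/so_remainder_comp/admissible_cst.
Qed.

Lemma dir_deriv2_comp d c : dir_deriv2 (f \o g) x d c =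
  dir_deriv2 f (g x) (dir_deriv g x d) (dir_deriv2 g x d c).
Proof. exact: cvg_lim (dd2_quot_comp_cvg d c). Qed.

End Composition.

Theorem proposition2p4 (R : realType) (n m r : nat)
  (g : 'rV[R]_n -> 'rV[R]_m) (f : 'rV[R]_m -> 'rV[R]_r) (xs : 'rV[R]_n) :
  so_gph_regular g xs -> so_gph_regular f (g xs) ->
  so_gph_regular (f \o g) xs.
Proof.
move=> g_reg f_reg; split.
- by case: g_reg f_reg => [g_lip _ _] [f_lip _ _]; exact: loc_lipschitz_comp.
- move=> d c; split; first exact: cvgP (dd_quot_comp_cvg g_reg f_reg d).
  exact: cvgP (dd2_quot_comp_cvg g_reg f_reg d c).
- move=> d w w_adm; set a := dir_deriv f (g xs) (dir_deriv g xs d).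
  set b := fun t => dir_deriv2 f (g xs) (dir_deriv g xs d) (dir_deriv2 g xs d (w t)).
  exists (so_remainder (f \o g) xs d w a b); split.
    exact/littleo_sqE/(so_remainder_comp g_reg f_reg).
  move=> t _; rewrite dir_deriv_comp // dir_deriv2_comp //; exact: so_expansion.
Qed.
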